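(* In the i.i.d. setting, consider Algorithm $\varepsilon$-Greedy-LCBT and let $a_n=\lceil\sqrt{n\ell_n}\rceil$. Let $\mathcal{E}_1$ be the event that $$|x^\top(\hat\theta_i-\theta)|\le\xi_i(x)\quad\text{for all }x\in\mathbb{R}^d\text{ and all }i\in\{a_n+1,\dots,n\}.$$ Let $g:=\sqrt{L\|V_{a_n}^{-1}\|_2}\,\big(\sigma\sqrt{d\log(n+n^2L/(d\beta))}+\sqrt{S\beta}\big)$. Let $\alpha^*$ satisfy $\mathbb{P}_{z\sim\mathcal{D}_x}(z^\top\theta\le\alpha^* )=1-\frac1n$. Then on $\mathcal{E}_1$, for every $i>a_n$ and every realization of $(\hat\theta_i,V_i,\mathcal{I}_i)$, $$\alpha^*-2g\le\alpha_i\le\alpha^*.$$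
   Context: Setting. Fix a horizon $n$ and dimension $d$. There is an unknown parameter $\theta\in\mathbb{R}^d$ with $\|\theta\|_2^2\le S$. For each $i\in[n]$ a feature vector $x_i\in\mathbb{R}^d$ is drawn independently from a distribution $\mathcal{D}_{x,i}$. Almost surely $\|x_i\|_2^2\le L$. The reward is $X_i=x_i^\top\theta\ge 0$. The noises $\eta_1,\dots,\eta_n$ are i.i.d. $\sigma$-sub-Gaussian and independent of the features, and $y_i=X_i+\eta_i$. i.i.d. setting: $\mathcal{D}_{x,i}=\mathcal{D}_x$ for all $i$. Quantities of Algorithm $\varepsilon$-Greedy-LCBT. Each stage $i$ is independently an exploration stage with probability $\varepsilon$ (else a decision stage). $\mathcal{I}_i$ is the set of exploration stages among $1,\dots,i$, and $\beta>0$. - $V_i=\sum_{t\in\mathcal{I}_i}x_tx_t^\top+\beta I_d$ and $\hat\theta_i=V_i^{-1}\sum_{t\in\mathcal{I}_i}y_tx_t$. - $\xi_i(x)=\sqrt{x^\top V_i^{-1}x}\,\big(\sigma\sqrt{d\log(n+n|\mathcal{I}_i|L/(d\beta))}+\sqrt{S\beta}\big)$. - $\alpha_i$ satisfies $\mathbb{P}_{z\sim\mathcal{D}_x}(z^\top\hat\theta_i-\xi_i(z)\le\alpha_i\mid\hat\theta_i,V_i,\mathcal{I}_i)=1-\frac1n$. The relevant distributions are assumed continuous, so that these quantiles exist and are unique. *)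

From HB Require Import structures.
From mathcomp Require Import all_boot all_order all_algebra.
From mathcomp Require Import all_classical all_reals all_analysis.
Set Implicit Arguments. Unset Strict Implicit. Unset Printing Implicit Defensive.
Import Order.TTheory GRing.Theory Num.Theory.
Local Open Scope classical_set_scope.
Local Open Scope ring_scope.

Definition normsq (R : realType) (d : nat) (x : 'cV[R]_d) : R :=
  \sum_(j < d) (x j 0) ^+ 2.
Definition norm2 (R : realType) (d : nat) (x : 'cV[R]_d) : R :=
  Num.sqrt (normsq x).
Definition dotv (R : realType) (d : nat) (x y : 'cV[R]_d) : R :=
  (x^T *m y) 0 0.
Definition spec_norm (R : realType) (d : nat) (A : 'M[R]_d) : R :=
  sup [set norm2 (A *m x) | x in [set x : 'cV[R]_d | norm2 x <= 1]].

Definition a_n (R : realType) (n : nat) (ell : R) : nat :=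
  `|Num.ceil (Num.sqrt (n%:R * ell))|%N.

(* Quantities of eps-Greedy-LCBT, for a realization:
   xs t = feature at stage t, ys t = observed y_t, expl t = stage t is an
   exploration stage. Stages are numbered 1..n. *)
Section Algo.
Variables (R : realType) (d : nat) (xs : nat -> 'cV[R]_d) (ys : nat -> R)
  (expl : nat -> bool) (beta : R).

Definition n_explore (i : nat) : nat := size [seq t <- iota 1 i | expl t].

Definition Vmat (i : nat) : 'M[R]_d :=
  \sum_(1 <= t < i.+1 | expl t) (xs t *m (xs t)^T) + beta%:M.

Definition theta_hat (i : nat) : 'cV[R]_d :=
  invmx (Vmat i) *m \sum_(1 <= t < i.+1 | expl t) (ys t *: xs t).

Definition xi (n : nat) (sigma S L : R) (i : nat) (x : 'cV[R]_d) : R :=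
  Num.sqrt (dotv x (invmx (Vmat i) *m x)) *
  (sigma * Num.sqrt (d%:R * ln (n%:R + n%:R * (n_explore i)%:R * L
                                          / (d%:R * beta)))
   + Num.sqrt (S * beta)).

Definition gconst (n : nat) (sigma S L ell : R) : R :=
  Num.sqrt (L * spec_norm (invmx (Vmat (a_n n ell)))) *
  (sigma * Num.sqrt (d%:R * ln (n%:R + n%:R ^+ 2 * L / (d%:R * beta)))
   + Num.sqrt (S * beta)).
End Algo.

Definition unique_quantile (R : realType) (dT : measure_display)
  (T : measurableType dT) (P : probability T R) (f : T -> R) (p a : R) : Prop :=
  P [set w | f w <= a] = p%:E /\
  (forall b, P [set w | f w <= b] = p%:E -> b = a).

From HB Require Import structures.
From mathcomp Require Import all_boot all_order all_algebra.
From mathcomp Require Import all_classical all_reals all_analysis.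
From mathcomp Require Import lra.
Set Implicit Arguments. Unset Strict Implicit. Unset Printing Implicit Defensive.
Import Order.TTheory GRing.Theory Num.Theory.
Local Open Scope classical_set_scope.
Local Open Scope ring_scope.

(* On E_1 the lower confidence bound [z^T theta_hat_i - xi_i(z)] lies between
   [z^T theta - 2 xi_i(z)] and [z^T theta]. The design matrices increase in the
   Loewner order, so [V_i^-1 <= V_(a_n)^-1] for [i >= a_n]; together with
   [|z|^2 <= L] a.s. and [|I_i| <= n] inside the logarithm this gives
   [xi_i(z) <= g]. Finally, an almost sure pointwise inequality [f <= h + c]
   transfers to the level-p quantiles as soon as the quantile of [f] is unique. *)

Section Euclidean.
Variables (R : realType) (d : nat).
Implicit Types (x y : 'cV[R]_d) (M : 'M[R]_d).

Lemma dotvE x y : dotv x y = \sum_(k < d) x k 0 * y k 0.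
Proof. by rewrite /dotv mxE; apply: eq_bigr => k _; rewrite mxE. Qed.

Lemma dotvC x y : dotv x y = dotv y x.
Proof. by rewrite !dotvE; apply: eq_bigr => k _; rewrite mulrC. Qed.

Lemma dotvDr x y y' : dotv x (y + y') = dotv x y + dotv x y'.
Proof. by rewrite !dotvE -big_split; apply: eq_bigr => k _; rewrite !mxE mulrDr. Qed.

Lemma dotvBr x y y' : dotv x (y - y') = dotv x y - dotv x y'.
Proof. by rewrite !dotvE -sumrB; apply: eq_bigr => k _; rewrite !mxE mulrBr. Qed.

Lemma dotvZr x a y : dotv x (a *: y) = a * dotv x y.
Proof. by rewrite !dotvE mulr_sumr; apply: eq_bigr => k _; rewrite !mxE mulrCA. Qed.

Lemma dotvBl x x' y : dotv (x - x') y = dotv x y - dotv x' y.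
Proof. by rewrite dotvC dotvBr !(dotvC y). Qed.

Lemma dotvZl a x y : dotv (a *: x) y = a * dotv x y.
Proof. by rewrite dotvC dotvZr dotvC. Qed.

Lemma dotv0r x : dotv x 0 = 0.
Proof. by rewrite /dotv mulmx0 mxE. Qed.

Lemma dotv_sumr (I : Type) (r : seq I) (P : pred I) (F : I -> 'cV[R]_d) x :
  dotv x (\sum_(t <- r | P t) F t) = \sum_(t <- r | P t) dotv x (F t).
Proof. by rewrite /dotv mulmx_sumr summxE. Qed.

Lemma dotv_mulmxr x M y : dotv x (M *m y) = dotv (M^T *m x) y.
Proof. by rewrite /dotv trmx_mul trmxK mulmxA. Qed.

Lemma dotvv x : dotv x x = normsq x.
Proof. by rewrite dotvE /normsq; apply: eq_bigr => k _; rewrite expr2. Qed.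

Lemma normsq_ge0 x : 0 <= normsq x.
Proof. by apply: sumr_ge0 => k _; rewrite sqr_ge0. Qed.

Lemma normsq_eq0 x : (normsq x == 0) = (x == 0).
Proof.
apply/idP/eqP => [|->]; last by rewrite /normsq big1 // => k _; rewrite mxE expr0n.
rewrite psumr_eq0 => [/allP x0|k _]; last by rewrite sqr_ge0.
apply/matrixP => k j; rewrite !mxE (ord1 j).
by have := x0 k (mem_index_enum _); rewrite sqrf_eq0 => /eqP.
Qed.

Lemma normsqZ a x : normsq (a *: x) = a ^+ 2 * normsq x.
Proof. by rewrite /normsq mulr_sumr; apply: eq_bigr => k _; rewrite mxE exprMn. Qed.

Lemma norm2_ge0 x : 0 <= norm2 x.
Proof. exact: sqrtr_ge0. Qed.

Lemma sqr_norm2 x : norm2 x ^+ 2 = normsq x.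
Proof. by rewrite sqr_sqrtr // normsq_ge0. Qed.

Lemma norm2_eq0 x : (norm2 x == 0) = (x == 0).
Proof. by rewrite sqrtr_eq0 -normsq_eq0 eq_le normsq_ge0 andbT. Qed.

Lemma norm2_0 : norm2 (0 : 'cV[R]_d) = 0.
Proof. by apply/eqP; rewrite norm2_eq0. Qed.

Lemma norm2Z a x : norm2 (a *: x) = `|a| * norm2 x.
Proof. by rewrite /norm2 normsqZ sqrtrM ?sqr_ge0 // sqrtr_sqr. Qed.

Lemma dotv_le_norm2 x y : dotv x y <= norm2 x * norm2 y.
Proof.
have [nxy0|nxy] := eqVneq (norm2 x * norm2 y) 0.
  rewrite nxy0; move/eqP: nxy0; rewrite mulf_eq0 !norm2_eq0 => /orP[] /eqP->;
    by rewrite ?dotv0r // dotvC dotv0r.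
have nxy_gt0 : 0 < norm2 x * norm2 y by rewrite lt_def nxy mulr_ge0 ?norm2_ge0.
have := normsq_ge0 (norm2 y *: x - norm2 x *: y).
rewrite -dotvv !dotvBl !dotvBr !dotvZl !dotvZr !dotvv (dotvC y) -!sqr_norm2.
nra.
Qed.

Definition qform M x : R := dotv x (M *m x).

Lemma qformD M M' x : qform (M + M') x = qform M x + qform M' x.
Proof. by rewrite /qform mulmxDl dotvDr. Qed.

Lemma qform_sum (I : Type) (r : seq I) (P : pred I) (F : I -> 'M[R]_d) x :
  qform (\sum_(t <- r | P t) F t) x = \sum_(t <- r | P t) qform (F t) x.
Proof. by rewrite /qform mulmx_suml dotv_sumr. Qed.

Lemma qform_scalar a x : qform a%:M x = a * normsq x.
Proof. by rewrite /qform mul_scalar_mx dotvZr dotvv. Qed.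

Lemma qform_outer y x : qform (y *m y^T) x = dotv y x ^+ 2.
Proof.
rewrite /qform -mulmxA.
have -> : y *m (y^T *m x) = dotv y x *: y.
  by apply/matrixP => i j; rewrite /dotv !mxE big_ord1 (ord1 j) mxE mulrC.
by rewrite dotvZr dotvC expr2.
Qed.

(* [det0P] yields a row vector [v] with [v *m M = 0], hence [qform M v^T = 0]. *)
Lemma qform_pos_unitmx M :
  (forall x, x != 0 -> 0 < qform M x) -> M \in unitmx.
Proof.
move=> Mpos; rewrite unitmxE unitfE; apply/det0P => -[v v0 vM].
have := Mpos v^T; rewrite -trmx0 (inj_eq trmx_inj) v0 => /(_ isT).
by rewrite /qform /dotv trmxK mulmxA vM mul0mx mxE ltxx.
Qed.

(* Completing the square: with [y = M^-1 x] and [w = M'^-1 x],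
   [0 <= qform M' (w - y)] and [qform M' y <= qform M y] give the claim. *)
Lemma qform_invmx_le M M' x : M'^T = M' ->
  (forall v, 0 <= qform M' v) -> (forall v, qform M' v <= qform M v) ->
  M \in unitmx -> M' \in unitmx -> qform (invmx M) x <= qform (invmx M') x.
Proof.
move=> M'sym M'pos M'M uM uM'.
set y := invmx M *m x; set w := invmx M' *m x.
have My : M *m y = x by rewrite /y mulmxA mulmxV // mul1mx.
have M'w : M' *m w = x by rewrite /w mulmxA mulmxV // mul1mx.
have M'wy : dotv w (M' *m y) = dotv x y by rewrite dotv_mulmxr M'sym M'w dotvC.
change (dotv x y <= dotv x w).
have := M'pos (w - y); have := M'M y.
rewrite /qform mulmxBr !dotvBl !dotvBr M'wy My M'w !(dotvC _ x).
lra.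
Qed.

Lemma norm2_unit_mulmx_le M u : norm2 u <= 1 ->
  norm2 (M *m u) <= Num.sqrt (\sum_(j < d) (\sum_(k < d) `|M j k|) ^+ 2).
Proof.
move=> u1; apply: ler_wsqrtr; apply: ler_sum => j _.
have uk k : `|u k 0| <= 1.
  have : `|u k 0| ^+ 2 <= 1.
    rewrite real_normK ?num_real //; apply: le_trans (_ : normsq u <= 1).
      by rewrite /normsq (bigD1 k) //= lerDl; apply: sumr_ge0 => i _; rewrite sqr_ge0.
    by rewrite -sqr_norm2; have := norm2_ge0 u; nra.
  by have := normr_ge0 (u k 0); nra.
rewrite -real_normK ?num_real // ler_sqr ?nnegrE ?sumr_ge0 //.
rewrite mxE; apply: le_trans (ler_norm_sum _ _ _) _.
by apply: ler_sum => k _; rewrite normrM ler_piMr.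
Qed.

Lemma norm2_mulmx_unit_le_spec_norm M u : norm2 u <= 1 ->
  norm2 (M *m u) <= spec_norm M.
Proof.
move=> u1; apply: sup_upper_bound; last by exists u.
split; first by exists (norm2 (M *m u)), u.
by exists (Num.sqrt (\sum_(j < d) (\sum_(k < d) `|M j k|) ^+ 2)) => _ [v v1 <-];
  exact: norm2_unit_mulmx_le.
Qed.

Lemma spec_norm_ge0 M : 0 <= spec_norm M.
Proof.
by have := @norm2_mulmx_unit_le_spec_norm M 0; rewrite mulmx0 norm2_0 ler01; apply.
Qed.

Lemma norm2_mulmx_le M x : norm2 (M *m x) <= spec_norm M * norm2 x.
Proof.
have [->|x0] := eqVneq x 0; first by rewrite mulmx0 norm2_0 mulr0.
have nx_gt0 : 0 < norm2 x by rewrite lt_def norm2_eq0 x0 norm2_ge0.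
have := @norm2_mulmx_unit_le_spec_norm M ((norm2 x)^-1 *: x).
rewrite -scalemxAr !norm2Z ger0_norm ?invr_ge0 ?norm2_ge0 // mulVf ?gt_eqF // lexx.
by move=> /(_ isT); rewrite ler_pdivrMl // mulrC.
Qed.

Lemma qform_le_spec_norm M x : qform M x <= spec_norm M * normsq x.
Proof.
apply: le_trans (dotv_le_norm2 x (M *m x)) _.
rewrite -sqr_norm2 expr2 mulrCA ler_wpM2l ?norm2_ge0 //.
exact: norm2_mulmx_le.
Qed.

End Euclidean.

Section DesignMatrix.
Variables (R : realType) (d : nat) (xs : nat -> 'cV[R]_d) (expl : nat -> bool)
  (beta : R).
Hypothesis beta_gt0 : 0 < beta.

Lemma qform_Vmat i x : qform (Vmat xs expl beta i) x =
  \sum_(1 <= t < i.+1 | expl t) dotv (xs t) x ^+ 2 + beta * normsq x.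
Proof.
rewrite /Vmat qformD qform_sum qform_scalar; congr (_ + _).
by apply: eq_bigr => t _; rewrite qform_outer.
Qed.

Lemma trmx_Vmat i : (Vmat xs expl beta i)^T = Vmat xs expl beta i.
Proof.
rewrite /Vmat linearD /= tr_scalar_mx linear_sum /=; congr (_ + _).
by apply: eq_bigr => t _; rewrite trmx_mul trmxK.
Qed.

Lemma qform_Vmat_ge0 i x : 0 <= qform (Vmat xs expl beta i) x.
Proof.
rewrite qform_Vmat; apply: addr_ge0; last by rewrite mulr_ge0 ?normsq_ge0 ?ltW.
by apply: sumr_ge0 => t _; rewrite sqr_ge0.
Qed.

Lemma qform_Vmat_le a i x : (a <= i)%N ->
  qform (Vmat xs expl beta a) x <= qform (Vmat xs expl beta i) x.
Proof.
move=> ai; rewrite !qform_Vmat lerD2r.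
rewrite [leRHS](big_cat_nat (n := a.+1)) //= ?ltnS // lerDl.
by apply: sumr_ge0 => t _; rewrite sqr_ge0.
Qed.

Lemma Vmat_unit i : Vmat xs expl beta i \in unitmx.
Proof.
apply: qform_pos_unitmx => x x0; rewrite qform_Vmat ltr_pwDr ?mulr_gt0 //.
  by rewrite lt_def normsq_eq0 x0 normsq_ge0.
by apply: sumr_ge0 => t _; rewrite sqr_ge0.
Qed.

Lemma qform_invmx_Vmat_le a i x : (a <= i)%N ->
  qform (invmx (Vmat xs expl beta i)) x <= qform (invmx (Vmat xs expl beta a)) x.
Proof.
move=> ai; apply: qform_invmx_le; rewrite ?Vmat_unit ?trmx_Vmat //.
  exact: qform_Vmat_ge0.
by move=> v; apply: qform_Vmat_le.
Qed.

Lemma n_explore_le i : (n_explore expl i <= i)%N.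
Proof. by rewrite /n_explore size_filter (leq_trans (count_size _ _)) ?size_iota. Qed.

End DesignMatrix.

Lemma ln_confidence_le (R : realType) (n m : nat) (L D : R) :
  (0 < n)%N -> (m <= n)%N -> 0 <= L -> 0 <= D ->
  ln (n%:R + n%:R * m%:R * L / D) <= ln (n%:R + n%:R ^+ 2 * L / D).
Proof.
move=> n0 mn L0 D0.
have n_gt0 : (0 : R) < n%:R by rewrite ltr0n.
have LD0 : 0 <= L / D by rewrite divr_ge0.
have pos (m' : nat) : 0 < n%:R + n%:R * m'%:R * L / D.
  by apply: ltr_wpDr; rewrite // -!mulrA mulr_ge0 ?ler0n // mulr_ge0 ?ler0n.
rewrite expr2 ler_ln ?posrE ?pos // lerD2l -!mulrA ler_wpM2l ?ler0n //.
by rewrite ler_wpM2r // ler_nat.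
Qed.

Lemma xi_le_gconst (R : realType) (d : nat) (xs : nat -> 'cV[R]_d)
    (expl : nat -> bool) (beta : R) (n : nat) (sigma S L ell : R) (i : nat)
    (z : 'cV[R]_d) :
  (0 < n)%N -> 0 < beta -> 0 <= sigma -> 0 <= L ->
  (a_n n ell <= i <= n)%N -> normsq z <= L ->
  xi xs expl beta n sigma S L i z <= gconst xs expl beta n sigma S L ell.
Proof.
move=> n0 beta0 sigma0 L0 /andP[ai iN] zL.
set Va := Vmat xs expl beta (a_n n ell).
have qz : qform (invmx (Vmat xs expl beta i)) z <= L * spec_norm (invmx Va).
  apply: le_trans (qform_invmx_Vmat_le xs expl beta0 z ai) _.
  apply: le_trans (qform_le_spec_norm _ _) _.
  by rewrite mulrC ler_wpM2r ?spec_norm_ge0.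
apply: ler_pM; rewrite ?sqrtr_ge0 ?addr_ge0 ?mulr_ge0 ?sqrtr_ge0 //.
  exact: ler_wsqrtr.
rewrite lerD2r ler_wpM2l // ler_wsqrtr // ler_wpM2l ?ler0n //.
apply: ln_confidence_le => //; first exact: leq_trans (n_explore_le _ _) iN.
by rewrite mulr_ge0 ?ler0n ?ltW.
Qed.

Section RandomFeature.
Variables (R : realType) (d : nat) (dO : measure_display)
  (Omega : measurableType dO) (z : Omega -> 'cV[R]_d).
Hypothesis mz : forall j : 'I_d, measurable_fun setT (fun w => z w j 0).

Lemma measurable_dotv c : measurable_fun setT (fun w => dotv (z w) c).
Proof.
under eq_fun do rewrite dotvE.
apply: measurable_sum => k.
by apply: measurable_realfun.measurable_funM; [exact: mz | exact: measurable_cst].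
Qed.

Lemma measurable_qform M : measurable_fun setT (fun w => qform M (z w)).
Proof.
under eq_fun do rewrite /qform dotvE.
apply: measurable_sum => k; apply: measurable_realfun.measurable_funM; first exact: mz.
under eq_fun do rewrite mxE.
apply: measurable_sum => l.
by apply: measurable_realfun.measurable_funM; [exact: measurable_cst | exact: mz].
Qed.

Lemma measurable_normsq : measurable_fun setT (fun w => normsq (z w)).
Proof.
under eq_fun do rewrite -[normsq _]mul1r -qform_scalar.
exact: measurable_qform.
Qed.

Lemma measurable_xi xs expl beta n sigma S L i :
  measurable_fun setT (fun w => xi xs expl beta n sigma S L i (z w)).
Proof.
apply: measurable_realfun.measurable_funM; last exact: measurable_cst.
apply: measurableT_comp (measurable_qform _).
exact: measurable_realfun.continuous_measurable_fun (@sqrt_continuous R).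
Qed.

End RandomFeature.

Section Quantile.
Variables (R : realType) (dO : measure_display) (Omega : measurableType dO)
  (P : probability Omega R).

Lemma measurable_sublevel (f : Omega -> R) b :
  measurable_fun setT f -> measurable [set w | f w <= b].
Proof.
move=> mf.
have := measurable_realfun.measurable_fun_ler mf (measurable_cst b) measurableT
  (Y := [set true]) I.
by rewrite setTI.
Qed.

Lemma unique_quantile_le (f h : Omega -> R) (G : set Omega) (c p a b : R) :
  measurable_fun setT f -> measurable_fun setT h -> measurable G ->
  P G = 1%E -> (forall w, G w -> f w <= h w + c) ->
  unique_quantile P f p a -> P [set w | h w <= b] = p%:E -> a <= b + c.
Proof.
move=> mf mh mG PG fh [Pfa fa_uniq] Phb.
rewrite leNgt; apply/negP => bca.
suff Pfbc : P [set w | f w <= b + c] = p%:E.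
  by move: bca; rewrite (fa_uniq _ Pfbc) ltxx.
have PGC : P (~` G) = 0%E by rewrite probability_setC // PG -EFinB subrr.
apply/eqP; rewrite eq_le; apply/andP; split.
  rewrite -Pfa; apply: le_measure; rewrite ?inE; try exact: measurable_sublevel.
  by move=> w /= /le_trans; apply; rewrite ltW.
rewrite -Phb -(measureU0 (mu := P) (measurable_sublevel _ mf) (measurableC mG) PGC).
apply: le_measure; rewrite ?inE; first exact: measurable_sublevel.
  by apply: measurableU; [exact: measurable_sublevel | exact: measurableC].
move=> w /= hw; have [Gw|] := pselect (G w); last by right.
by left; apply: le_trans (fh w Gw) _; rewrite lerD2r.
Qed.

End Quantile.

Theorem mainTheorem14 (R : realType) (d n : nat) (L S sigma beta ell : R)
  (theta : 'cV[R]_d) (dO : measure_display) (Omega : measurableType dO)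
  (P : probability Omega R) (z : Omega -> 'cV[R]_d)
  (xs : nat -> 'cV[R]_d) (ys : nat -> R) (expl : nat -> bool)
  (alpha_star : R) :
  (0 < d)%N -> (0 < n)%N -> 0 < beta -> 0 <= sigma -> 0 <= L ->
  normsq theta <= S ->
  (* z ~ D_x : a random vector on (Omega, P) *)
  (forall j : 'I_d, measurable_fun setT (fun w => z w j 0)) ->
  P [set w | normsq (z w) <= L] = 1%E ->
  P [set w | 0 <= dotv (z w) theta] = 1%E ->
  (forall t, (1 <= t <= n)%N -> normsq (xs t) <= L /\ 0 <= dotv (xs t) theta) ->
  unique_quantile P (fun w => dotv (z w) theta) (1 - n%:R^-1) alpha_star ->
  (* event E_1 *)
  (forall (x : 'cV[R]_d) (i : nat), (a_n n ell < i <= n)%N ->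
     `|dotv x (theta_hat xs ys expl beta i - theta)|
       <= xi xs expl beta n sigma S L i x) ->
  forall i : nat, (a_n n ell < i <= n)%N ->
  forall alpha : R,
    unique_quantile P
      (fun w => dotv (z w) (theta_hat xs ys expl beta i)
                - xi xs expl beta n sigma S L i (z w))
      (1 - n%:R^-1) alpha ->
    alpha_star - 2 * gconst xs expl beta n sigma S L ell <= alpha <= alpha_star.
Proof.
move=> _ n0 beta0 sigma0 L0 _ mz PL _ _ quantile_star E1 i /andP[ai iN] alpha
  quantile_alpha.
set th := theta_hat xs ys expl beta i.
set g := gconst xs expl beta n sigma S L ell.
have mtheta := measurable_dotv mz theta.
have mlcb := measurable_realfun.measurable_funB (measurable_dotv mz th)
  (measurable_xi mz xs expl beta n sigma S L i).
have close w :
    `|dotv (z w) th - dotv (z w) theta| <= xi xs expl beta n sigma S L i (z w).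
  by rewrite -dotvBr; apply: E1; rewrite ai iN.
apply/andP; split.
- suff : alpha_star <= alpha + 2 * g by lra.
  apply: unique_quantile_le mtheta mlcb _ PL _ quantile_star quantile_alpha.1.
    exact: measurable_sublevel (measurable_normsq mz).
  move=> w /= zL; have : xi xs expl beta n sigma S L i (z w) <= g.
    by apply: xi_le_gconst; rewrite ?(ltnW ai) ?iN.
  by have := close w; rewrite ler_norml => /andP[? _]; lra.
- rewrite -[alpha_star]addr0.
  apply: unique_quantile_le mlcb mtheta measurableT (probability_setT P) _
    quantile_alpha quantile_star.1.
  by move=> w _ /=; have := close w; rewrite ler_norml addr0 => /andP[_ ?]; lra.
Qed.
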